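(* Let $(P,\mathcal C,\varepsilon)$ be a chained projection category. Define $\mathbf S(P,\mathcal C,\varepsilon)=(S,\star,D,R)$ by $S=\mathcal C$, $D(a)=\mathbf d(a)$, $R(a)=\mathbf r(a)$, and for $a,b\in\mathcal C$, with $p=\mathbf r(a)$, $q=\mathbf d(b)$, $p'=q\delta_p$, $q'=p\theta_q$, $$a\star b=a\rfloor_{p'}\circ\varepsilon[p',q']\circ{}_{q'}\lfloor b.$$ Then $\mathbf S(P,\mathcal C,\varepsilon)$ is a DRC-semigroup.
   Context: (The product is well defined since $p'\le p$, $q'\le q$ and $p'\,\mathscr F\,q'$.) \textbf{DRC-semigroups.} A DRC-semigroup is an algebra $(S,\cdot,D,R)$ with $(S,\cdot)$ a semigroup and unary $D,R$ satisfying, for all $a,b$: $D(a)a=a$, $aR(a)=a$; $D(ab)=D(aD(b))$, $R(ab)=R(R(a)b)$; $D(ab)=D(a)D(ab)D(a)$, $R(ab)=R(b)R(ab)R(b)$; $R(D(a))=D(a)$, $D(R(a))=R(a)$. \textbf{Projection algebras.} Maps are written on the right and composed left to right. A projection algebra is a set $P$ with maps $\theta_p,\delta_p:P\to P$ ($p\in P$) such that for all $p,q$: $p\theta_p=p$, $p\delta_p=p$; $p\theta_{q\theta_p}=q\theta_p$, $p\delta_{q\delta_p}=q\delta_p$; $\theta_q\theta_{q\theta_p}=\theta_q\theta_p$, $\delta_q\delta_{q\delta_p}=\delta_q\delta_p$; $\theta_p\delta_p=\theta_p$, $\delta_p\theta_p=\delta_p$; $\theta_{p\delta_q}\theta_p=\theta_q\theta_p$,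 $\delta_{p\theta_q}\delta_p=\delta_q\delta_p$. Order: $p\le q\iff p=p\theta_q$. Relation: $p\,\mathscr F\,q\iff p=q\delta_p$ and $q=p\theta_q$. \textbf{Biordered categories.} A small category is identified with its morphisms, objects with identities ($v\mathcal C$); $\mathbf d,\mathbf r$ are domain/codomain and $a\circ b$ is defined iff $\mathbf r(a)=\mathbf d(b)$. A left-ordered category is $(\mathcal C,\le)$, $\le$ a partial order with: $a\le b\Rightarrow\mathbf d(a)\le\mathbf d(b),\mathbf r(a)\le\mathbf r(b)$; $a\le b$, $c\le c'$ with $a\circ c$, $b\circ c'$ defined $\Rightarrow a\circ c\le b\circ c'$; for each object $p\le\mathbf d(a)$ a unique $u\le a$ with $\mathbf d(u)=p$ (denoted ${}_p\lfloor a$). Right-ordered: dually, a unique $v\le a$ with $\mathbf r(v)=q$ for each object $q\le\mathbf r(a)$ (denoted $a\rfloor_q$). A biordered category $(\mathcal C,\le_l,\le_r)$ is left-ordered under $\le_l$, right-ordered under $\le_r$, with $\le_l,\le_r$ equal on $v\mathcal C$. Biordered morphisms are functors preserving both orders. $t^\downarrow=\{s:s\le t\}$; $\mathcal C(q,r)=\{a:\mathbf d(a)=q,\mathbf r(a)=r\}$. \textbf{Projection categories.} A weak projection category $(P,\mathcal C)$: $\mathcal C$ biordered, $P=v\mathcal C$ a projection algebra whose order equals the restriction of $\le_l$ and of $\le_r$. For $a\in\mathcal C$: $p\vartheta_a=\mathbf r({}_p\lfloor a)$ for $p\le\mathbf d(a)$; $q\vartheta'_a=\mathbf d(a\rfloor_q)$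 for $q\le\mathbf r(a)$; $\Theta_a=\theta_{\mathbf d(a)}\vartheta_a$, $\Delta_a=\delta_{\mathbf r(a)}\vartheta'_a$ (maps $P\to P$). A projection category also satisfies (C1): $\Theta_{a\rfloor_q}=\Theta_a\theta_q$, $\Delta_{{}_p\lfloor a}=\Delta_a\delta_p$ for $p\le\mathbf d(a)$, $q\le\mathbf r(a)$. \textbf{Chain category.} Paths: tuples $(p_1,\dots,p_k)$ with $p_1\mathscr F\cdots\mathscr F p_k$, $\mathbf d=p_1$, $\mathbf r=p_k$, composition $(p_1,\dots,p_k)\circ(p_k,\dots,p_l)=(p_1,\dots,p_l)$; restrictions ${}_q\lfloor(p_1,\dots,p_k)=(q_1,\dots,q_k)$, $q_1=q\le p_1$, $q_i=q_{i-1}\theta_{p_i}$; $(p_1,\dots,p_k)\rfloor_r=(r_1,\dots,r_k)$, $r_k=r\le p_k$, $r_i=r_{i+1}\delta_{p_i}$. The chain category $\mathcal C(P)$ is the quotient of this (biordered) path category by the congruence generated by $(p,p)\approx(p)$, with elements $[p_1,\dots,p_k]$, objects $P$, and restrictions computed on representatives. \textbf{Chained projection categories.} An evaluation map is a biordered functor $\varepsilon:\mathcal C(P)\to\mathcal C$ with $\varepsilon[p]=p$. For $b\in\mathcal C(q,r)$, $p,s\in P$, let $e=s\Delta_b\delta_p$, $e_1=s\Delta_b\delta_{p\theta_q}$, $e_2=p\theta_{s\Delta_b}$, $f=p\Theta_b\theta_s$, $f_1=s\delta_{p\Theta_b}$, $f_2=p\Theta_b\theta_{s\delta_r}$ (the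 following are then defined), $\lambda(p,b,s)=\varepsilon[e,e_1]\circ({}_{p\theta_q}\lfloor b)\rfloor_{f_1}\circ\varepsilon[f_1,f]$, $\rho(p,b,s)=\varepsilon[e,e_2]\circ{}_{e_2}\lfloor(b\rfloor_{s\delta_r})\circ\varepsilon[f_2,f]$. A chained projection category is a triple $(P,\mathcal C,\varepsilon)$ with $(P,\mathcal C)$ a projection category, $\varepsilon$ an evaluation map, and (C2) $\lambda(p,b,s)=\rho(p,b,s)$ for all $b\in\mathcal C$, $p,s\in P$. *)

(* Conventions:
   - A small category is identified with its type of morphisms C; objects are
     the identities, i.e. the a with  d a = a.  Composition [comp a b] is a
     total function, meaningful only when  r a = d b.
   - Maps on P are written on the right in the paper; here
       th p x  stands for  x theta_p,   del p x  stands for  x delta_p.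
     They are functions C -> C but only their values on objects matter.
   - lres p a  = {}_p|_ a  (left restriction),  rres a q = a _|_q (right). *)
From Stdlib Require Import List.
Import ListNotations.

Set Implicit Arguments.

Record cpc_data (C : Type) := CPC {
  dom  : C -> C;
  cod  : C -> C;
  comp : C -> C -> C;
  lel  : C -> C -> Prop;
  ler  : C -> C -> Prop;
  lres : C -> C -> C;
  rres : C -> C -> C;
  th   : C -> C -> C;
  del  : C -> C -> C;
  eps  : list C -> C
}.

Section Defs.
Variable C : Type.
Variable X : cpc_data C.

Local Notation d := (dom X).
Local Notation r := (cod X).
Local Notation comp := (comp X).
Local Notation lel := (lel X).
Local Notation ler := (ler X).
Local Notation lres := (lres X).
Local Notation rres := (rres X).
Local Notation th := (th X).
Local Notation del := (del X).
Local Notation eps := (eps X).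

Definition ob (a : C) : Prop := d a = a.

Definition is_category : Prop :=
  (forall a, d (d a) = d a /\ r (d a) = d a /\ d (r a) = r a /\ r (r a) = r a) /\
  (forall a b, r a = d b -> d (comp a b) = d a /\ r (comp a b) = r b) /\
  (forall a, comp (d a) a = a /\ comp a (r a) = a) /\
  (forall a b c, r a = d b -> r b = d c -> comp (comp a b) c = comp a (comp b c)).

Definition is_partial_order (le : C -> C -> Prop) : Prop :=
  (forall a, le a a) /\
  (forall a b, le a b -> le b a -> a = b) /\
  (forall a b c, le a b -> le b c -> le a c).

Definition is_left_ordered : Prop :=
  is_partial_order lel /\
  (forall a b, lel a b -> lel (d a) (d b) /\ lel (r a) (r b)) /\
  (forall a b c c', lel a b -> lel c c' -> r a = d c -> r b = d c' ->
     lel (comp a c) (comp b c')) /\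
  (* existence and uniqueness of u <= a with d u = p, for objects p <= d a *)
  (forall a p, ob p -> lel p (d a) -> lel (lres p a) a /\ d (lres p a) = p) /\
  (forall a u, lel u a -> u = lres (d u) a).

Definition is_right_ordered : Prop :=
  is_partial_order ler /\
  (forall a b, ler a b -> ler (d a) (d b) /\ ler (r a) (r b)) /\
  (forall a b c c', ler a b -> ler c c' -> r a = d c -> r b = d c' ->
     ler (comp a c) (comp b c')) /\
  (forall a q, ob q -> ler q (r a) -> ler (rres a q) a /\ r (rres a q) = q) /\
  (forall a v, ler v a -> v = rres a (r v)).

Definition is_biordered_category : Prop :=
  is_category /\ is_left_ordered /\ is_right_ordered /\
  (forall p q, ob p -> ob q -> (lel p q <-> ler p q)).

Definition is_projection_algebra : Prop :=
  (forall p x, ob p -> ob x -> ob (th p x) /\ ob (del p x)) /\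
  (forall p, ob p -> th p p = p /\ del p p = p) /\
  (forall p q, ob p -> ob q ->
     th (th p q) p = th p q /\ del (del p q) p = del p q) /\
  (forall p q x, ob p -> ob q -> ob x ->
     th (th p q) (th q x) = th p (th q x) /\
     del (del p q) (del q x) = del p (del q x) /\
     del p (th p x) = th p x /\
     th p (del p x) = del p x /\
     th p (th (del q p) x) = th p (th q x) /\
     del p (del (th q p) x) = del p (del q x)).

Definition pa_le (p q : C) : Prop := p = th q p.
Definition Frel (p q : C) : Prop := p = del p q /\ q = th q p.

Definition is_weak_projection_category : Prop :=
  is_biordered_category /\ is_projection_algebra /\
  (forall p q, ob p -> ob q -> (pa_le p q <-> lel p q) /\ (pa_le p q <-> ler p q)).

(* Theta_a = theta_{d a} vartheta_a ,  Delta_a = delta_{r a} vartheta'_a *)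
Definition Theta (a x : C) : C := r (lres (th (d a) x) a).
Definition Delta (a x : C) : C := d (rres a (del (r a) x)).

Definition is_projection_category : Prop :=
  is_weak_projection_category /\
  (forall a q x, ob q -> lel q (r a) -> ob x ->
     Theta (rres a q) x = th q (Theta a x)) /\
  (forall a p x, ob p -> lel p (d a) -> ob x ->
     Delta (lres p a) x = del p (Delta a x)).

Fixpoint fchain (l : list C) : Prop :=
  match l with
  | [] => True
  | [p] => ob p
  | p :: ((q :: _) as t) => ob p /\ Frel p q /\ fchain t
  end.

Fixpoint chain (f : C -> C -> C) (x : C) (l : list C) : list C :=
  match l with
  | [] => [x]
  | p :: rest => x :: chain f (f p x) rest
  end.

(* _q|_(p1,...,pk) = (q1,...,qk), q1 = q, q_i = q_{i-1} theta_{p_i} *)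
Definition path_lres (q : C) (ps : list C) : list C := chain th q (tl ps).
(* (p1,...,pk)_|_r = (r1,...,rk), rk = r, r_i = r_{i+1} delta_{p_i} *)
Definition path_rres (ps : list C) (s : C) : list C :=
  rev (chain del s (tl (rev ps))).

(* eps induces a biordered functor C(P) -> C with eps[p] = p.
   Functors out of the quotient C(P) are exactly functors on the path category
   that are constant on classes of the congruence generated by (p,p) ~ (p). *)
Definition is_evaluation_map : Prop :=
  (forall p, ob p -> eps [p] = p) /\
  (forall l1 p l2, fchain (l1 ++ p :: l2) ->
     eps (l1 ++ p :: p :: l2) = eps (l1 ++ p :: l2)) /\
  (forall p l, fchain (p :: l) ->
     d (eps (p :: l)) = p /\ r (eps (p :: l)) = last l p) /\
  (forall p l1 l2, fchain (p :: l1) -> fchain (last l1 p :: l2) ->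
     eps (p :: l1 ++ l2) = comp (eps (p :: l1)) (eps (last l1 p :: l2))) /\
  (forall p l q, fchain (p :: l) -> ob q -> lel q p ->
     lel (eps (path_lres q (p :: l))) (eps (p :: l))) /\
  (forall p l s, fchain (p :: l) -> ob s -> lel s (last l p) ->
     ler (eps (path_rres (p :: l) s)) (eps (p :: l))).

Definition lambda_ (p b s : C) : C :=
  let q := d b in
  let e := del p (Delta b s) in
  let e1 := del (th q p) (Delta b s) in
  let f := th s (Theta b p) in
  let f1 := del (Theta b p) s in
  comp (comp (eps [e; e1]) (rres (lres (th q p) b) f1)) (eps [f1; f]).

Definition rho_ (p b s : C) : C :=
  let rb := r b in
  let e := del p (Delta b s) in
  let e2 := th (Delta b s) p in
  let f := th s (Theta b p) in
  let f2 := th (del rb s) (Theta b p) in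
  comp (comp (eps [e; e2]) (lres e2 (rres b (del rb s)))) (eps [f2; f]).

Definition is_chained_projection_category : Prop :=
  is_projection_category /\ is_evaluation_map /\
  (forall b p s, ob p -> ob s -> lambda_ p b s = rho_ p b s).

Definition star (a b : C) : C :=
  let p := r a in
  let q := d b in
  let p' := del p q in
  let q' := th q p in
  comp (comp (rres a p') (eps [p'; q'])) (lres q' b).

End Defs.

Definition is_DRC_semigroup (S : Type) (mul : S -> S -> S) (D R : S -> S) : Prop :=
  (forall a b c, mul (mul a b) c = mul a (mul b c)) /\
  (forall a, mul (D a) a = a /\ mul a (R a) = a) /\
  (forall a b, D (mul a b) = D (mul a (D b)) /\ R (mul a b) = R (mul (R a) b)) /\
  (forall a b, D (mul a b) = mul (mul (D a) (D (mul a b))) (D a) /\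
               R (mul a b) = mul (mul (R b) (R (mul a b))) (R b)) /\
  (forall a, R (D a) = D a /\ D (R a) = R a).

From Pilot Require Import Defs.
From Stdlib Require List.
Import List.ListNotations.
Local Open Scope list_scope.

(* Write [a * b] for [star a b].  Its domain and codomain are the projections
   [Delta a (d b)] and [Theta b (r a)], which lie below [d a] and [r b]; since a
   product of comparable projections is the smaller one, the DRC identities
   follow.  For associativity put [p = r a] and [s = d c].  Pushing the
   restrictions through the composites (the evaluation map preserves both
   orders) and applying (C1), both [(a * b) * c] and [a * (b * c)] become
   [a_|e o M o _f|c] with the same [e] and [f], where the middle factor [M] is
   [lambda(p, b, s)] on one side and [rho(p, b, s)] on the other; (C2)
   identifies them. *)

Section ChainedProjectionCategory.

Variables (C : Type) (X : cpc_data C).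

Local Notation d := (dom X).
Local Notation r := (cod X).
Local Notation comp := (comp X).
Local Notation lel := (lel X).
Local Notation ler := (ler X).
Local Notation lres := (lres X).
Local Notation rres := (rres X).
Local Notation th := (th X).
Local Notation del := (del X).
Local Notation eps := (eps X).
Local Notation ob := (ob X).
Local Notation pa_le := (pa_le X).
Local Notation Frel := (Frel X).
Local Notation Theta := (Theta X).
Local Notation Delta := (Delta X).
Local Notation star := (star X).

Hypothesis HB : is_biordered_category X.
Hypothesis HP : is_projection_algebra X.
Hypothesis Hord : forall p q, ob p -> ob q ->
  (pa_le p q <-> lel p q) /\ (pa_le p q <-> ler p q).
Hypothesis Theta_rres : forall a q x, ob q -> lel q (r a) -> ob x ->
  Theta (rres a q) x = th q (Theta a x).
Hypothesis Delta_lres : forall a p x, ob p -> lel p (d a) -> ob x ->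
  Delta (lres p a) x = del p (Delta a x).
Hypothesis HE : is_evaluation_map X.
Hypothesis lambda_rho : forall b p s, ob p -> ob s -> lambda_ X p b s = rho_ X p b s.

Lemma ob_d a : ob (d a).
Proof. destruct HB as [[H _] _]; apply H. Qed.

Lemma ob_r a : ob (r a).
Proof. destruct HB as [[H _] _]; apply H. Qed.

#[local] Hint Resolve ob_d ob_r : core.

Lemma r_d a : r (d a) = d a.
Proof. destruct HB as [[H _] _]; apply H. Qed.

Lemma r_ob p : ob p -> r p = p.
Proof. intros Hp; rewrite <- Hp; apply r_d. Qed.

Lemma comp_d a b : r a = d b -> d (comp a b) = d a.
Proof. destruct HB as [[_ [H _]] _]; apply H. Qed.

Lemma comp_r a b : r a = d b -> r (comp a b) = r b.
Proof. destruct HB as [[_ [H _]] _]; apply H. Qed.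

Lemma comp_d_l a : comp (d a) a = a.
Proof. destruct HB as [[_ [_ [H _]]] _]; apply H. Qed.

Lemma comp_r_r a : comp a (r a) = a.
Proof. destruct HB as [[_ [_ [H _]]] _]; apply H. Qed.

Lemma comp_assoc a b c : r a = d b -> r b = d c -> comp (comp a b) c = comp a (comp b c).
Proof. destruct HB as [[_ [_ [_ H]]] _]; apply H. Qed.

Lemma comp_assoc3 a b c e : r a = d b -> r b = d c -> r c = d e ->
  comp (comp (comp a b) c) e = comp a (comp (comp b c) e).
Proof.
  intros Hab Hbc Hce.
  rewrite comp_assoc, comp_assoc, <- (comp_assoc b c e); auto.
  - rewrite comp_d; auto.
  - rewrite comp_r; auto.
Qed.

Lemma comp_ob p : ob p -> comp p p = p.
Proof. intros Hp; rewrite <- Hp at 1; apply comp_d_l. Qed.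

Lemma lel_refl a : lel a a.
Proof. destruct HB as [_ [[[H _] _] _]]; apply H. Qed.

Lemma lel_trans a b c : lel a b -> lel b c -> lel a c.
Proof. destruct HB as [_ [[[_ [_ H]] _] _]]; apply H. Qed.

Lemma lel_r a b : lel a b -> lel (r a) (r b).
Proof. destruct HB as [_ [[_ [H _]] _]]; apply H. Qed.

Lemma lel_comp a b c c' : lel a b -> lel c c' -> r a = d c -> r b = d c' ->
  lel (comp a c) (comp b c').
Proof. destruct HB as [_ [[_ [_ [H _]]] _]]; apply H. Qed.

Lemma lres_lel a p : ob p -> lel p (d a) -> lel (lres p a) a.
Proof. destruct HB as [_ [[_ [_ [_ [H _]]]] _]]; apply H. Qed.

Lemma lres_d a p : ob p -> lel p (d a) -> d (lres p a) = p.
Proof. destruct HB as [_ [[_ [_ [_ [H _]]]] _]]; apply H. Qed.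

Lemma lres_uniq a u : lel u a -> u = lres (d u) a.
Proof. destruct HB as [_ [[_ [_ [_ [_ H]]]] _]]; apply H. Qed.

Lemma ler_refl a : ler a a.
Proof. destruct HB as [_ [_ [[[H _] _] _]]]; apply H. Qed.

Lemma ler_trans a b c : ler a b -> ler b c -> ler a c.
Proof. destruct HB as [_ [_ [[[_ [_ H]] _] _]]]; apply H. Qed.

Lemma ler_d a b : ler a b -> ler (d a) (d b).
Proof. destruct HB as [_ [_ [[_ [H _]] _]]]; apply H. Qed.

Lemma ler_comp a b c c' : ler a b -> ler c c' -> r a = d c -> r b = d c' ->
  ler (comp a c) (comp b c').
Proof. destruct HB as [_ [_ [[_ [_ [H _]]] _]]]; apply H. Qed.

Lemma rres_ler a q : ob q -> ler q (r a) -> ler (rres a q) a.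
Proof. destruct HB as [_ [_ [[_ [_ [_ [H _]]]] _]]]; apply H. Qed.

Lemma rres_r a q : ob q -> ler q (r a) -> r (rres a q) = q.
Proof. destruct HB as [_ [_ [[_ [_ [_ [H _]]]] _]]]; apply H. Qed.

Lemma rres_uniq a v : ler v a -> v = rres a (r v).
Proof. destruct HB as [_ [_ [[_ [_ [_ [_ H]]]] _]]]; apply H. Qed.

Lemma lres_d_id a : lres (d a) a = a.
Proof. symmetry; apply lres_uniq, lel_refl. Qed.

Lemma rres_r_id a : rres a (r a) = a.
Proof. symmetry; apply rres_uniq, ler_refl. Qed.

Lemma lres_lres a p q : ob p -> ob q -> lel p (d a) -> lel q p ->
  lres q (lres p a) = lres q a.
Proof.
  intros Hp Hq Hpa Hqp.
  assert (Hq' : lel q (d (lres p a))) by (rewrite lres_d; auto).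
  rewrite (lres_uniq a (lres q (lres p a))), lres_d; auto.
  apply lel_trans with (lres p a); apply lres_lel; auto.
Qed.

Lemma rres_rres a p q : ob p -> ob q -> ler p (r a) -> ler q p ->
  rres (rres a p) q = rres a q.
Proof.
  intros Hp Hq Hpa Hqp.
  assert (Hq' : ler q (r (rres a p))) by (rewrite rres_r; auto).
  rewrite (rres_uniq a (rres (rres a p) q)), rres_r; auto.
  apply ler_trans with (rres a p); apply rres_ler; auto.
Qed.

Lemma lres_comp a b p : ob p -> lel p (d a) -> r a = d b ->
  lres p (comp a b) = comp (lres p a) (lres (r (lres p a)) b).
Proof.
  intros Hp Hpa Hab.
  assert (Hb : lel (r (lres p a)) (d b)) by (rewrite <- Hab; apply lel_r, lres_lel; auto).
  assert (Hcomp : r (lres p a) = d (lres (r (lres p a)) b)) by (rewrite lres_d; auto).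
  rewrite (lres_uniq (comp a b) (comp (lres p a) (lres (r (lres p a)) b))).
  - rewrite comp_d, lres_d; auto.
  - apply lel_comp; auto using lres_lel.
Qed.

Lemma rres_comp a b s : ob s -> ler s (r b) -> r a = d b ->
  rres (comp a b) s = comp (rres a (d (rres b s))) (rres b s).
Proof.
  intros Hs Hsb Hab.
  assert (Ha : ler (d (rres b s)) (r a)) by (rewrite Hab; apply ler_d, rres_ler; auto).
  assert (Hcomp : r (rres a (d (rres b s))) = d (rres b s)) by (rewrite rres_r; auto).
  rewrite (rres_uniq (comp a b) (comp (rres a (d (rres b s))) (rres b s))).
  - rewrite comp_r, rres_r; auto.
  - apply ler_comp; auto using rres_ler.
Qed.

Lemma th_ob p x : ob p -> ob x -> ob (th p x).
Proof. destruct HP as [H _]; apply H. Qed.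

Lemma del_ob p x : ob p -> ob x -> ob (del p x).
Proof. destruct HP as [H _]; apply H. Qed.

Lemma th_id p : ob p -> th p p = p.
Proof. destruct HP as [_ [H _]]; apply H. Qed.

Lemma del_id p : ob p -> del p p = p.
Proof. destruct HP as [_ [H _]]; apply H. Qed.

Lemma th_image p q : ob p -> ob q -> th (th p q) p = th p q.
Proof. destruct HP as [_ [_ [H _]]]; apply H. Qed.

Lemma del_image p q : ob p -> ob q -> del (del p q) p = del p q.
Proof. destruct HP as [_ [_ [H _]]]; apply H. Qed.

Lemma th_th p q x : ob p -> ob q -> ob x -> th (th p q) (th q x) = th p (th q x).
Proof. destruct HP as [_ [_ [_ H]]]; apply H. Qed.

Lemma del_del p q x : ob p -> ob q -> ob x -> del (del p q) (del q x) = del p (del q x).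
Proof. destruct HP as [_ [_ [_ H]]]; apply H. Qed.

Lemma del_th p x : ob p -> ob x -> del p (th p x) = th p x.
Proof. destruct HP as [_ [_ [_ H]]]; intros; apply (H p p x); auto. Qed.

Lemma th_del p x : ob p -> ob x -> th p (del p x) = del p x.
Proof. destruct HP as [_ [_ [_ H]]]; intros; apply (H p p x); auto. Qed.

Lemma th_th_del p q x : ob p -> ob q -> ob x -> th p (th (del q p) x) = th p (th q x).
Proof. destruct HP as [_ [_ [_ H]]]; apply H. Qed.

Lemma del_del_th p q x : ob p -> ob q -> ob x -> del p (del (th q p) x) = del p (del q x).
Proof. destruct HP as [_ [_ [_ H]]]; apply H. Qed.

Ltac solve_ob := repeat first [assumption | apply th_ob | apply del_ob | apply ob_d | apply ob_r].

#[local] Hint Extern 1 (ob _) => solve_ob : core.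

Lemma th_idem p x : ob p -> ob x -> th p (th p x) = th p x.
Proof.
  intros Hp Hx. rewrite <- (del_th p x) at 1 by auto.
  rewrite th_del by auto. apply del_th; auto.
Qed.

Lemma del_idem p x : ob p -> ob x -> del p (del p x) = del p x.
Proof.
  intros Hp Hx. rewrite <- (th_del p x) at 1 by auto.
  rewrite del_th by auto. apply th_del; auto.
Qed.

Lemma pa_le_refl p : ob p -> pa_le p p.
Proof. intros; unfold Defs.pa_le; rewrite th_id; auto. Qed.

Lemma th_le p x : ob p -> ob x -> pa_le (th p x) p.
Proof. intros; unfold Defs.pa_le; rewrite th_idem; auto. Qed.

Lemma del_le p x : ob p -> ob x -> pa_le (del p x) p.
Proof. intros; unfold Defs.pa_le; rewrite th_del; auto. Qed.

#[local] Hint Resolve pa_le_refl th_le del_le : core.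

Lemma del_of_le p q : ob p -> ob q -> pa_le p q -> del q p = p.
Proof. intros Hp Hq H; red in H; rewrite H at 1; rewrite del_th; auto. Qed.

Lemma th_of_ge p q : ob p -> ob q -> pa_le p q -> th p q = p.
Proof. intros Hp Hq H; red in H; rewrite H at 1; rewrite th_image; auto. Qed.

Lemma del_of_ge p q : ob p -> ob q -> pa_le p q -> del p q = p.
Proof.
  intros Hp Hq H; rewrite <- (del_of_le p q) at 1 by auto.
  rewrite del_image by auto; apply del_of_le; auto.
Qed.

Lemma th_of_del p q : ob p -> ob q -> th q (del p q) = th q p.
Proof.
  intros Hp Hq; rewrite <- (th_id p) at 2 by auto.
  rewrite <- (th_th_del q p p), (th_of_ge (del p q) p); auto.
Qed.

Lemma del_of_th p q : ob p -> ob q -> del p (th q p) = del p q.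
Proof.
  intros Hp Hq; rewrite <- (del_id q) at 2 by auto.
  rewrite <- (del_del_th p q q), (del_of_ge (th q p) q); auto.
Qed.

(* This is why the middle factor [eps [p'; q']] of [star] is well defined. *)
Lemma Frel_del_th p q : ob p -> ob q -> Frel (del p q) (th q p).
Proof.
  intros Hp Hq; split.
  - rewrite <- (del_th q p), del_del, (del_th q p), del_of_th; auto.
  - rewrite <- (th_del p q), th_th, (th_del p q), th_of_del; auto.
Qed.

Lemma Frel_lres p p' q : ob p -> ob p' -> ob q -> Frel p p' -> pa_le q p ->
  Frel q (th p' q).
Proof.
  intros Hp Hp' Hq [F _] Hle.
  assert (Hdel : del q p' = q).
  { pose proof (del_del_th q p p' Hq Hp Hp') as E.
    rewrite <- Hle, del_idem, <- F in E by auto.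
    rewrite E; apply del_of_ge; auto. }
  rewrite <- Hdel at 1; apply Frel_del_th; auto.
Qed.

Lemma Frel_rres p p' s : ob p -> ob p' -> ob s -> Frel p p' -> pa_le s p' ->
  Frel (del p s) s.
Proof.
  intros Hp Hp' Hs [_ F] Hle.
  assert (Hth : th s p = s).
  { pose proof (th_th_del s p' p Hs Hp' Hp) as E.
    rewrite (del_of_le s p'), th_idem, <- F in E by auto.
    rewrite E; apply th_of_ge; auto. }
  rewrite <- Hth at 2; apply Frel_del_th; auto.
Qed.

Lemma del_del_of_th p q w : ob p -> ob q -> ob w -> pa_le w q ->
  del (del p q) (del (th q p) w) = del p w.
Proof.
  intros Hp Hq Hw Hle.
  rewrite <- (th_of_del p q), del_del_th, del_del, (del_of_le w q); auto.
Qed.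

Lemma th_th_of_del s q t : ob s -> ob q -> ob t -> pa_le t q ->
  th (th s q) (th (del q s) t) = th s t.
Proof.
  intros Hs Hq Ht Hle.
  rewrite <- (del_of_th q s), th_th_del, th_th, <- Hle; auto.
Qed.

Lemma Frel_del_del_th p q w : ob p -> ob q -> ob w -> pa_le w q ->
  Frel (del p w) (del (th q p) w).
Proof.
  intros; rewrite <- (del_del_of_th p q w) by auto.
  apply Frel_rres with (th q p); auto using Frel_del_th.
Qed.

Lemma Frel_th_th_del s q t : ob s -> ob q -> ob t -> pa_le t q ->
  Frel (th (del q s) t) (th s t).
Proof.
  intros; rewrite <- (th_th_of_del s q t) by auto.
  apply Frel_lres with (del q s); auto using Frel_del_th.
Qed.

Lemma le_lel p q : ob p -> ob q -> pa_le p q -> lel p q.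
Proof. intros Hp Hq; apply (Hord p q Hp Hq). Qed.

Lemma lel_le p q : ob p -> ob q -> lel p q -> pa_le p q.
Proof. intros Hp Hq; apply (Hord p q Hp Hq). Qed.

Lemma le_ler p q : ob p -> ob q -> pa_le p q -> ler p q.
Proof. intros Hp Hq; apply (Hord p q Hp Hq). Qed.

Lemma ler_le p q : ob p -> ob q -> ler p q -> pa_le p q.
Proof. intros Hp Hq; apply (Hord p q Hp Hq). Qed.

#[local] Hint Resolve le_lel le_ler : core.

Lemma lres_ob p q : ob p -> ob q -> pa_le q p -> lres q p = q.
Proof. intros Hp Hq Hqp; rewrite (lres_uniq p q) at 2; [rewrite Hq|]; auto. Qed.

Lemma rres_ob p q : ob p -> ob q -> pa_le q p -> rres p q = q.
Proof. intros Hp Hq Hqp; rewrite (rres_uniq p q) at 2; [rewrite r_ob|]; auto. Qed.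

Lemma Theta_le a x : ob x -> pa_le (Theta a x) (r a).
Proof. intros; unfold Defs.Theta; apply lel_le, lel_r, lres_lel; auto. Qed.

Lemma Delta_le a x : ob x -> pa_le (Delta a x) (d a).
Proof. intros; unfold Defs.Delta; apply ler_le, ler_d, rres_ler; auto. Qed.

#[local] Hint Resolve Theta_le Delta_le : core.

Lemma eps_d p q : ob p -> ob q -> Frel p q -> d (eps [p; q]) = p.
Proof. destruct HE as [_ [_ [H _]]]; intros; apply (H p [q]); simpl; auto. Qed.

Lemma eps_r p q : ob p -> ob q -> Frel p q -> r (eps [p; q]) = q.
Proof. destruct HE as [_ [_ [H _]]]; intros; apply (H p [q]); simpl; auto. Qed.

Lemma eps_diag p : ob p -> eps [p; p] = p.
Proof.
  destruct HE as [Hsingle [Hdup _]]; intros Hp.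
  exact (eq_trans (Hdup [] p [] Hp) (Hsingle p Hp)).
Qed.

Lemma lres_eps p p' q : ob p -> ob p' -> ob q -> Frel p p' -> pa_le q p ->
  lres q (eps [p; p']) = eps [q; th p' q].
Proof.
  destruct HE as [_ [_ [_ [_ [H _]]]]]; intros Hp Hp' Hq F Hqp.
  assert (Hle : lel (eps [q; th p' q]) (eps [p; p'])) by (apply (H p [p']); simpl; auto).
  rewrite (lres_uniq _ _ Hle), eps_d; eauto using Frel_lres.
Qed.

Lemma rres_eps p p' s : ob p -> ob p' -> ob s -> Frel p p' -> pa_le s p' ->
  rres (eps [p; p']) s = eps [del p s; s].
Proof.
  destruct HE as [_ [_ [_ [_ [_ H]]]]]; intros Hp Hp' Hs F Hsp.
  assert (Hle : ler (eps [del p s; s]) (eps [p; p'])) by (apply (H p [p']); simpl; auto).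
  rewrite (rres_uniq _ _ Hle), eps_r; eauto using Frel_rres.
Qed.

Lemma star_unfold a b : star a b =
  comp (comp (rres a (del (r a) (d b))) (eps [del (r a) (d b); th (d b) (r a)]))
       (lres (th (d b) (r a)) b).
Proof. reflexivity. Qed.

Lemma star_composable a b :
  r (rres a (del (r a) (d b))) = d (eps [del (r a) (d b); th (d b) (r a)]) /\
  r (eps [del (r a) (d b); th (d b) (r a)]) = d (lres (th (d b) (r a)) b).
Proof.
  pose proof (Frel_del_th (r a) (d b)) as F.
  rewrite rres_r, eps_d, eps_r, lres_d; auto.
Qed.

Lemma star_d a b : d (star a b) = Delta a (d b).
Proof.
  destruct (star_composable a b) as [H1 H2].
  rewrite star_unfold, !comp_d; auto.
  rewrite comp_r; auto.
Qed.

Lemma star_r a b : r (star a b) = Theta b (r a).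
Proof.
  destruct (star_composable a b) as [H1 H2].
  rewrite star_unfold, !comp_r; auto.
  rewrite comp_r; auto.
Qed.

Lemma star_ob_l p g : ob p -> ob g -> pa_le g p -> star p g = g.
Proof.
  intros Hp Hg Hgp.
  rewrite star_unfold, (r_ob p), Hg, (del_of_le g p), (th_of_ge g p), eps_diag,
    rres_ob, lres_ob, !comp_ob; auto.
Qed.

Lemma star_ob_r p g : ob p -> ob g -> pa_le g p -> star g p = g.
Proof.
  intros Hp Hg Hgp.
  rewrite star_unfold, (r_ob g), Hp, (del_of_ge g p), <- Hgp, eps_diag,
    rres_ob, lres_ob, !comp_ob; auto.
Qed.

Lemma star_d_l a : star (d a) a = a.
Proof.
  rewrite star_unfold, r_d, del_id, th_id, eps_diag, rres_ob, lres_d_id, comp_ob; auto.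
  apply comp_d_l.
Qed.

Lemma star_r_r a : star a (r a) = a.
Proof.
  rewrite star_unfold, ob_r, del_id, th_id, eps_diag, rres_r_id, lres_ob, !(comp_r_r a); auto.
Qed.

Lemma star_d_le a b : pa_le (d (star a b)) (d a).
Proof. rewrite star_d; auto. Qed.

Lemma star_r_le a b : pa_le (r (star a b)) (r b).
Proof. rewrite star_r; auto. Qed.

Lemma star_d_d a b : d (star a (d b)) = d (star a b).
Proof. rewrite !star_d, ob_d; auto. Qed.

Lemma r_star_r a b : r (star (r a) b) = r (star a b).
Proof. rewrite !star_r, (r_ob (r a)); auto. Qed.

Lemma star_d_sandwich a b : star (star (d a) (d (star a b))) (d a) = d (star a b).
Proof. rewrite (star_ob_l (d a) (d (star a b))), star_ob_r; auto using star_d_le. Qed.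

Lemma star_r_sandwich a b : star (star (r b) (r (star a b))) (r b) = r (star a b).
Proof. rewrite (star_ob_l (r b) (r (star a b))), star_ob_r; auto using star_r_le. Qed.

(* The axiom (C1) at the restrictions that occur in [lambda_] and [rho_]. *)
Lemma d_rres_lres b p s : ob p -> ob s ->
  d (rres (lres (th (d b) p) b) (del (Theta b p) s)) = del (th (d b) p) (Delta b s).
Proof. intros Hp Hs; exact (Delta_lres b (th (d b) p) s ltac:(auto) ltac:(auto) Hs). Qed.

Lemma r_lres_rres b p s : ob p -> ob s ->
  r (lres (th (Delta b s) p) (rres b (del (r b) s))) = th (del (r b) s) (Theta b p).
Proof. intros Hp Hs; exact (Theta_rres b (del (r b) s) p ltac:(auto) ltac:(auto) Hp). Qed.

Lemma rres_star a b s : ob s ->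
  rres (star a b) (del (Theta b (r a)) s) =
  comp (comp (rres a (del (r a) (Delta b s)))
             (eps [del (r a) (Delta b s); del (th (d b) (r a)) (Delta b s)]))
       (rres (lres (th (d b) (r a)) b) (del (Theta b (r a)) s)).
Proof.
  intros Hs.
  destruct (star_composable a b) as [H1 H2].
  pose proof (Frel_del_th (r a) (d b)) as F.
  pose proof (Frel_rres (del (r a) (d b)) (th (d b) (r a)) (del (th (d b) (r a)) (Delta b s)))
    as F'.
  rewrite star_unfold, rres_comp, d_rres_lres; auto.
  - rewrite rres_comp, rres_eps, eps_d, rres_rres, del_del_of_th; auto.
    rewrite eps_r; auto.
  - rewrite comp_r; auto.
Qed.

Lemma lres_star b c p : ob p ->
  lres (th (Delta b (d c)) p) (star b c) =
  comp (comp (lres (th (Delta b (d c)) p) (rres b (del (r b) (d c))))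
             (eps [th (del (r b) (d c)) (Theta b p); th (d c) (Theta b p)]))
       (lres (th (d c) (Theta b p)) c).
Proof.
  intros Hp.
  destruct (star_composable b c) as [H1 H2].
  pose proof (Frel_del_th (r b) (d c)) as F.
  pose proof (Frel_lres (del (r b) (d c)) (th (d c) (r b)) (th (del (r b) (d c)) (Theta b p)))
    as F'.
  rewrite star_unfold, lres_comp, lres_comp, r_lres_rres; auto.
  - rewrite lres_eps, comp_r, eps_r, lres_lres, th_th_of_del; auto.
    rewrite r_lres_rres, eps_d; auto.
  - rewrite comp_d; auto.
  - rewrite comp_r; auto.
Qed.

Lemma star_star_l a b c :
  star (star a b) c =
  comp (comp (rres a (del (r a) (Delta b (d c)))) (lambda_ X (r a) b (d c)))
       (lres (th (d c) (Theta b (r a))) c).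
Proof.
  pose proof (Frel_del_del_th (r a) (d b) (Delta b (d c))) as Fe.
  pose proof (Frel_del_th (Theta b (r a)) (d c)) as Ff.
  rewrite (star_unfold (star a b) c), star_r, rres_star by auto.
  f_equal.
  apply comp_assoc3.
  - rewrite rres_r, eps_d; auto.
  - rewrite eps_r, d_rres_lres; auto.
  - rewrite rres_r, eps_d; auto.
Qed.

Lemma star_star_r a b c :
  star a (star b c) =
  comp (comp (rres a (del (r a) (Delta b (d c)))) (rho_ X (r a) b (d c)))
       (lres (th (d c) (Theta b (r a))) c).
Proof.
  pose proof (Frel_del_th (r a) (Delta b (d c))) as Fe.
  pose proof (Frel_th_th_del (d c) (r b) (Theta b (r a))) as Ff.
  assert (HAE : r (rres a (del (r a) (Delta b (d c))))
                = d (eps [del (r a) (Delta b (d c)); th (Delta b (d c)) (r a)]))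
    by (rewrite rres_r, eps_d; auto).
  assert (HEM : r (eps [del (r a) (Delta b (d c)); th (Delta b (d c)) (r a)])
                = d (lres (th (Delta b (d c)) (r a)) (rres b (del (r b) (d c)))))
    by (rewrite eps_r, lres_d; auto).
  assert (HME : r (lres (th (Delta b (d c)) (r a)) (rres b (del (r b) (d c))))
                = d (eps [th (del (r b) (d c)) (Theta b (r a)); th (d c) (Theta b (r a))]))
    by (rewrite r_lres_rres, eps_d; auto).
  assert (HEL : r (eps [th (del (r b) (d c)) (Theta b (r a)); th (d c) (Theta b (r a))])
                = d (lres (th (d c) (Theta b (r a))) c))
    by (rewrite eps_r, lres_d; auto).
  rewrite (star_unfold a (star b c)), star_d, lres_star by auto.
  rewrite <- comp_assoc, <- comp_assoc; try rewrite comp_r; try rewrite comp_d; auto.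
  f_equal; apply comp_assoc3; auto.
Qed.

Lemma star_assoc a b c : star (star a b) c = star a (star b c).
Proof. rewrite star_star_l, star_star_r, lambda_rho; auto. Qed.

End ChainedProjectionCategory.

Theorem theorem6p5 (C : Type) (X : cpc_data C) :
  is_chained_projection_category X ->
  is_DRC_semigroup (star X) (dom X) (cod X).
Proof.
  intros [[[HB [HP Hord]] [HTheta HDelta]] [HE Hlambda]].
  split; [|split; [|split; [|split]]].
  - intros a b c; apply star_assoc; auto.
  - intros a; split; [apply star_d_l | apply star_r_r]; auto.
  - intros a b; split; [symmetry; apply star_d_d | symmetry; apply r_star_r]; auto.
  - intros a b; split.
    + symmetry; apply star_d_sandwich; auto.
    + symmetry; apply star_r_sandwich; auto.
  - intros a; split; [apply r_d | apply ob_r]; auto.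
Qed.
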